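(* For all indices $\mathbf k$ and $\mathbf l$, $\zeta^{t,*}_{\mathrm{shift}}(\mathbf k*\mathbf l;T)=\zeta^{t,*}_{\mathrm{shift}}(\mathbf k;T)\,\zeta^{t,*}_{\mathrm{shift}}(\mathbf l;T)$ in $\mathbb R[T][[t]]$.
   Context: $t,T$ are commuting indeterminates. An index is a finite tuple $\mathbf{k}=(k_1,\dots,k_r)$ of positive integers ($r\ge0$), $\mathrm{dep}(\mathbf k)=r$, $\mathrm{wt}(\mathbf k)=\sum k_i$; $\oplus$ is componentwise sum of tuples of equal length and $b\binom{\mathbf{k}}{\mathbf{l}}=\prod_{i}\binom{k_i+l_i-1}{l_i}$. Admissible: empty or $k_r\ge2$; $\zeta(\mathbf k)=\sum_{0<n_1<\cdots<n_r}n_1^{-k_1}\cdots n_r^{-k_r}$. $\mathfrak H=\mathbb Q\langle e_0,e_1\rangle$, $\mathfrak H^1=\mathbb Q+e_1\mathfrak H$, $\mathfrak H^0=\mathbb Q+e_1\mathfrak He_0$, $e_{\mathbf{k}}=e_1e_0^{k_1-1}\cdots e_1e_0^{k_r-1}$. The harmonic product $*$ on $\mathfrak H^1$: bilinear, $1*w=w*1=w$, $we_{(k)}*w'e_{(l)}=(we_{(k)}*w')e_{(l)}+(w*w'e_{(l)})e_{(k)}-(w*w')e_{(k+l)}$. It is transported to formal $\mathbb Q$-linear combinations of indices via the linear bijection $\mathbf k\mapsto(-1)^{\mathrm{dep}(\mathbf k)}e_{\mathbf k}$, and maps on indices are extended linearly. $Z^*_T:\mathfrak H^1\to\mathbb R[T]$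 is the unique $\mathbb Q$-algebra homomorphism for $*$ with $Z^*_T(e_{\mathbf k})=(-1)^{\mathrm{dep}(\mathbf k)}\zeta(\mathbf k)$ for admissible $\mathbf k$ and $Z^*_T(e_1)=-T$; $\zeta^*(\mathbf k;T)=(-1)^{\mathrm{dep}(\mathbf k)}Z^*_T(e_{\mathbf k})$. $\zeta^{t,*}_{\mathrm{shift}}(\mathbf{k};T)=\sum_{\mathbf n\in\mathbb Z_{\ge0}^{\mathrm{dep}(\mathbf k)}}b\binom{\mathbf k}{\mathbf n}\zeta^{*}(\mathbf k\oplus\mathbf n;T)(-t)^{\mathrm{wt}(\mathbf n)}$. *)

From HB Require Import structures.
From mathcomp Require Import all_boot all_order all_algebra.
From mathcomp Require Import all_classical all_reals all_analysis.
Set Implicit Arguments. Unset Strict Implicit. Unset Printing Implicit Defensive.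
Import Order.TTheory GRing.Theory Num.Theory.
Import numFieldNormedType.Exports.
Local Open Scope ring_scope.

Definition is_index (k : seq nat) : bool := all (fun x => 0 < x)%N k.

Definition admissible (k : seq nat) : bool :=
  if k is [::] then true else (1 < last 0%N k)%N.

(* Truncated multiple zeta sum, on the REVERSED index:
   mzv_part [:: k_r; ...; k_1] N = sum_{0<n_1<...<n_r<N} n_1^-k_1 ... n_r^-k_r. *)
Fixpoint mzv_part {R : realType} (rk : seq nat) (N : nat) : R :=
  match rk with
  | [::] => 1
  | a :: rk' => \sum_(1 <= n < N) ((n%:R : R) ^- a) * mzv_part rk' n
  end.

Definition mzv {R : realType} (k : seq nat) : R :=
  limn (fun N => @mzv_part R (rev k) N).

(* Harmonic (stuffle) product on indices, on REVERSED words, recursion on the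
   last letters: (w a) * (w' b) = ((w a) * w') b + (w * (w' b)) a + (w * w') (a+b).
   The result is a list of indices, each with coefficient +1. *)
Fixpoint stuffle_rev (u v : seq nat) {struct u} : seq (seq nat) :=
  match u with
  | [::] => [:: v]
  | a :: u' =>
      let fix st_r (v : seq nat) : seq (seq nat) :=
        match v with
        | [::] => [:: u]
        | b :: v' =>
            map (cons b) (st_r v') ++ map (cons a) (stuffle_rev u' v)
              ++ map (cons (a + b)%N) (stuffle_rev u' v')
        end in
      st_r v
  end.

(* k * l as a formal sum of indices (the harmonic product transported from
   H^1 via k |-> (-1)^dep(k) e_k; all coefficients are +1). *)
Definition stuffle (k l : seq nat) : seq (seq nat) :=
  map rev (stuffle_rev (rev k) (rev l)).

(* Zs is the harmonic-regularized MZV  k |-> zeta^*(k;T) in R[T]: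
   the (unique) algebra homomorphism for * with zeta^*(k;T) = zeta(k) for
   admissible k and zeta^*(1;T) = T. *)
Definition is_zeta_star {R : realType} (Zs : seq nat -> {poly R}) : Prop :=
  [/\ Zs [::] = 1,
      Zs [:: 1%N] = 'X,
      (forall k, is_index k -> admissible k -> Zs k = (mzv k)%:P) &
      (forall k l, is_index k -> is_index l ->
         \sum_(m <- stuffle k l) Zs m = Zs k * Zs l)].

Fixpoint wcomps (r m : nat) : seq (seq nat) :=
  match r with
  | 0 => if m == 0%N then [:: [::]] else [::]
  | r'.+1 => flatten [seq map (cons i) (wcomps r' (m - i)) | i <- iota 0 m.+1]
  end.

Definition bcoef (k n : seq nat) : nat :=
  \prod_(p <- zip k n) 'C(p.1 + p.2 - 1, p.2).

Definition oplus (k n : seq nat) : seq nat := [seq p.1 + p.2 | p <- zip k n]%N.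

(* Elements of R[T][[t]] are represented by their coefficient sequences
   nat -> {poly R}. The coefficient of t^m in zeta^{t,*}_shift(k;T). *)
Definition zeta_shift {R : realType} (Zs : seq nat -> {poly R}) (k : seq nat)
    (m : nat) : {poly R} :=
  (-1) ^+ m * \sum_(n <- wcomps (size k) m) (bcoef k n)%:R * Zs (oplus k n).

Definition zeta_shift_lin {R : realType} (Zs : seq nat -> {poly R})
    (s : seq (seq nat)) (m : nat) : {poly R} :=
  \sum_(k <- s) zeta_shift Zs k m.

Definition ps_mul {R : realType} (f g : nat -> {poly R}) (m : nat) : {poly R} :=
  \sum_(i < m.+1) f i * g (m - i)%N.

From HB Require Import structures.
From mathcomp Require Import all_boot all_order all_algebra.
From mathcomp Require Import all_classical all_reals all_analysis.
From mathcomp Require Import zify.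
Import GRing.Theory Num.Theory.
Local Open Scope ring_scope.

(* The t-shift acts letter by letter: up to the global sign (-1)^wt, a letter a
   becomes a + j with weight 'C(a + j - 1, j), the coefficient of t^j in
   (1 - t)^-a.  Since (1 - t)^-(a + b) = (1 - t)^-a (1 - t)^-b, this letter map
   is multiplicative for the letter product (a, b) |-> a + b, and every such
   letter map extends to a homomorphism of the harmonic algebra, by induction
   along the recursive definition of the stuffle product.  Composing with the
   *-homomorphism zeta^* gives the identity coefficientwise in t. *)

Section Antidiagonal.
Context {V : nmodType}.

Definition antidiag (m : nat) (f : nat -> nat -> V) : V :=
  \sum_(i < m.+1) f i (m - i)%N.

Lemma eq_antidiag m (f g : nat -> nat -> V) :
  (forall i j, (i + j = m)%N -> f i j = g i j) -> antidiag m f = antidiag m g.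
Proof. by move=> fg; apply: eq_bigr => i _; apply: fg; have := ltn_ord i; lia. Qed.

Lemma antidiagD m (f g : nat -> nat -> V) :
  antidiag m (fun i j => f i j + g i j) = antidiag m f + antidiag m g.
Proof. exact: big_split. Qed.

Lemma antidiag_sum (I : Type) (r : seq I) (P : pred I) m (f : I -> nat -> nat -> V) :
  antidiag m (fun i j => \sum_(x <- r | P x) f x i j) =
  \sum_(x <- r | P x) antidiag m (f x).
Proof. exact: exchange_big. Qed.

Lemma antidiagMn m (f : nat -> nat -> V) n :
  antidiag m (fun i j => f i j *+ n) = antidiag m f *+ n.
Proof. exact: sumrMnl. Qed.

Lemma antidiagC m (f : nat -> nat -> V) : antidiag m f = antidiag m (fun i j => f j i).
Proof.
rewrite /antidiag (reindex_inj rev_ord_inj) /=; apply: eq_bigr => i _.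
by congr f; have := ltn_ord i; lia.
Qed.

Lemma antidiag_deltar m (g : nat -> V) :
  antidiag m (fun i j => if (j == 0)%N then g i else 0) = g m.
Proof.
rewrite /antidiag big_ord_recr /= subnn eqxx big1 ?add0r // => i _.
by rewrite ifF //; apply/negbTE; have := ltn_ord i; lia.
Qed.

Lemma antidiag_deltal m (g : nat -> V) :
  antidiag m (fun i j => if (i == 0)%N then g j else 0) = g m.
Proof. by rewrite antidiagC antidiag_deltar. Qed.

Lemma big_ord_addn_eq n (g : nat -> V) c m :
  \sum_(k < n) (if (c + k == m)%N then g k else 0) =
  if ((c <= m) && (m - c < n))%N then g (m - c)%N else 0.
Proof.
case: ifP => [/andP[cm mcn] | Hcm].
- rewrite (bigD1 (Ordinal mcn)) //= ifT; last by apply/eqP; lia.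
  rewrite big1 ?addr0 // => k /eqP k_neq; rewrite ifF //; apply/negbTE/eqP => E.
  by apply: k_neq; apply: val_inj => /=; lia.
- rewrite big1 // => k _; rewrite ifF //; apply/negbTE/eqP => E.
  by move/negbT: Hcm; rewrite negb_and -!ltnNge; have := ltn_ord k; lia.
Qed.

Lemma antidiag2E m (h : nat -> nat -> nat -> V) :
  antidiag m (fun i r => antidiag r (h i)) =
  \sum_(i < m.+1) \sum_(j < m.+1) \sum_(k < m.+1)
     (if (i + j + k == m)%N then h i j k else 0).
Proof.
apply: eq_bigr => i _; have := ltn_ord i => lt_im.
under [RHS]eq_bigr => j _ do rewrite (big_ord_addn_eq _ (h i j)).
rewrite /antidiag (big_ord_widen _ (fun j => h i j (m - i - j)%N) (_ : (m - i).+1 <= m.+1)%N);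
  last lia.
rewrite big_mkcond /=; apply: eq_bigr => j _.
case: ifP => H1; case: ifP => H2 //.
- by congr h; lia.
- by move/negbT: H2; rewrite negb_and -!ltnNge; lia.
- by case/andP: H2 => H2 H3; move/negbT: H1; rewrite -ltnNge; lia.
Qed.

Lemma antidiagCA m (h : nat -> nat -> nat -> V) :
  antidiag m (fun i r => antidiag r (h i)) =
  antidiag m (fun j r => antidiag r (fun i k => h i j k)).
Proof.
rewrite !antidiag2E exchange_big /=; apply: eq_bigr => j _; apply: eq_bigr => i _.
by rewrite (addnC j i).
Qed.

Lemma antidiagA m (h : nat -> nat -> nat -> V) :
  antidiag m (fun i r => antidiag i (fun s i' => h s i' r)) =
  antidiag m (fun s n => antidiag n (h s)).
Proof.
rewrite antidiagC /= !antidiag2E exchange_big /=; apply: eq_bigr => s _.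
rewrite exchange_big /=; apply: eq_bigr => i _; apply: eq_bigr => r _.
by congr (if _ then _ else _); apply/eqP/eqP; lia.
Qed.

End Antidiagonal.

Definition nbinom (a j : nat) : nat := 'C(a + j - 1, j).

Lemma nbinom0n j : nbinom 0 j = (j == 0)%N.
Proof. by case: j => [|j] //; rewrite /nbinom bin_small //; lia. Qed.

Lemma nbinomn0 a : nbinom a 0 = 1%N.
Proof. exact: bin0. Qed.

Lemma nbinomS a n : nbinom a.+1 n = \sum_(t < n.+1) nbinom a t.
Proof.
elim: n => [|n IH]; first by rewrite big_ord1 !nbinomn0.
rewrite big_ord_recr /= -IH /nbinom.
rewrite (_ : (a.+1 + n.+1 - 1 = (a + n).+1)%N); last lia.
by rewrite binS addnC; congr (_ + _)%N; congr binomial; lia.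
Qed.

Lemma nbinomD a b n : nbinom (a + b) n = antidiag n (fun s j => nbinom a s * nbinom b j)%N.
Proof.
elim: b n => [|b IH] n.
  rewrite addn0 /antidiag big_ord_recr /= subnn nbinom0n muln1 big1 ?add0n // => i _.
  by rewrite nbinom0n (_ : (n - i == 0)%N = false) ?muln0 //; have := ltn_ord i; lia.
rewrite addnS nbinomS.
transitivity (antidiag n (fun t k => antidiag t (fun s j => nbinom a s * nbinom b j)%N)).
  by apply: eq_bigr => t _; rewrite IH.
by rewrite antidiagA; apply: eq_bigr => s _; rewrite nbinomS big_distrr.
Qed.

Section Shift.
Context {V : nmodType}.
Variable c : nat -> nat -> nat.

(* [shift c F u m] is the sum of (\prod_i c u_i n_i) * F (u (+) n) over all
   n of weight m, i.e. the t^m-coefficient of the shift of u, evaluated by F. *)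
Fixpoint shift (F : seq nat -> V) (u : seq nat) (m : nat) : V :=
  match u with
  | [::] => if (m == 0)%N then F [::] else 0
  | a :: u' => antidiag m (fun j n => shift (fun w => F ((a + j)%N :: w)) u' n *+ c a j)
  end.

Lemma eq_shift (F G : seq nat -> V) u m : F =1 G -> shift F u m = shift G u m.
Proof.
elim: u F G m => [|a u IH] F G m FG /=; first by rewrite FG.
by apply: eq_antidiag => j n _; congr (_ *+ _); apply: IH => w.
Qed.

Lemma eq_shift_in (F G : seq nat -> V) u m :
  (forall w, is_index w -> F w = G w) -> is_index u -> shift F u m = shift G u m.
Proof.
elim: u F G m => [|a u IH] F G m FG /=; first by move=> _; rewrite FG.
case/andP=> a_gt0 u_idx; apply: eq_antidiag => j n _; congr (_ *+ _).
by apply: IH => // w w_idx; apply: FG => /=; rewrite w_idx andbT; lia.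
Qed.

Lemma eq_shift_cons (F G : seq nat -> V) a u m :
  (forall x w, F (x :: w) = G (x :: w)) -> shift F (a :: u) m = shift G (a :: u) m.
Proof.
by move=> FG /=; apply: eq_antidiag => j n _; congr (_ *+ _); apply: eq_shift => w.
Qed.

Lemma shift0 u m : shift (fun _ => 0) u m = 0.
Proof.
elim: u m => [|a u IH] m /=; first by case: ifP.
by rewrite /antidiag big1 // => j _; rewrite IH mul0rn.
Qed.

Lemma shiftD (F G : seq nat -> V) u m :
  shift (fun w => F w + G w) u m = shift F u m + shift G u m.
Proof.
elim: u F G m => [|a u IH] F G m /=; first by case: ifP; rewrite ?addr0.
by rewrite -antidiagD; apply: eq_antidiag => j n _; rewrite IH mulrnDl.
Qed.

Lemma shift_sum (I : Type) (r : seq I) (P : pred I) (f : I -> seq nat -> V) u m :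
  shift (fun w => \sum_(x <- r | P x) f x w) u m = \sum_(x <- r | P x) shift (f x) u m.
Proof.
elim: r => [|x r IH].
  by rewrite big_nil -[RHS](shift0 u m); apply: eq_shift => w; rewrite big_nil.
rewrite big_cons -IH; case Px: (P x).
- by rewrite -shiftD; apply: eq_shift => w; rewrite big_cons Px.
- by apply: eq_shift => w; rewrite big_cons Px.
Qed.

Lemma shiftMn (F : seq nat -> V) n u m :
  shift (fun w => F w *+ n) u m = shift F u m *+ n.
Proof.
rewrite -[n]card_ord -!sumr_const -shift_sum.
by apply: eq_shift => w; rewrite sumr_const card_ord.
Qed.

Lemma shift_antidiag (g : seq nat -> nat -> nat -> V) r u m :
  shift (fun w => antidiag r (g w)) u m = antidiag r (fun j k => shift (g^~ j ^~ k) u m).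
Proof. exact: shift_sum. Qed.

Lemma shift_if (F : seq nat -> V) (b : bool) u m :
  shift (fun w => if b then F w else 0) u m = if b then shift F u m else 0.
Proof. by case: b; rewrite ?shift0. Qed.

Lemma shift_rcons (F : seq nat -> V) u a m :
  shift F (rcons u a) m =
  antidiag m (fun j n => shift (fun w => F (rcons w (a + j)%N)) u n *+ c a j).
Proof.
elim: u F m => [|b u IH] F m //=.
under eq_antidiag => i r _ do rewrite IH -antidiagMn.
rewrite antidiagCA; apply: eq_antidiag => j n _.
by rewrite -antidiagMn; apply: eq_antidiag => i k _; rewrite mulrnAC.
Qed.

Lemma shift_rev (F : seq nat -> V) u m :
  shift F u m = shift (fun w => F (rev w)) (rev u) m.
Proof.
elim: u F m => [|a u IH] F m //=.
rewrite rev_cons shift_rcons; apply: eq_antidiag => j n _; rewrite IH.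
by congr (_ *+ _); apply: eq_shift => w; rewrite rev_rcons.
Qed.

Lemma sum_shift_cons (F : seq nat -> V) (s : seq (seq nat)) b m :
  \sum_(w <- s) shift F (b :: w) m =
  antidiag m (fun j n => (\sum_(w <- s) shift (fun w' => F ((b + j)%N :: w')) w n) *+ c b j).
Proof. by rewrite -antidiag_sum; apply: eq_antidiag => j n _; rewrite sumrMnl. Qed.

Definition shift_pair (H : seq nat -> seq nat -> V) (u v : seq nat) (m : nat) : V :=
  antidiag m (fun i j => shift (fun x => shift (H x) v j) u i).

Lemma shift_pairD (H K : seq nat -> seq nat -> V) u v m :
  shift_pair (fun x y => H x y + K x y) u v m = shift_pair H u v m + shift_pair K u v m.
Proof.
rewrite -antidiagD; apply: eq_antidiag => i j _.
by rewrite -shiftD; apply: eq_shift => x; rewrite shiftD.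
Qed.

Lemma eq_shift_pair_in (H K : seq nat -> seq nat -> V) u v m :
  (forall x y, is_index x -> is_index y -> H x y = K x y) ->
  is_index u -> is_index v -> shift_pair H u v m = shift_pair K u v m.
Proof.
move=> HK u_idx v_idx; apply: eq_antidiag => i j _.
by apply: eq_shift_in => // x x_idx; apply: eq_shift_in => // y; apply: HK.
Qed.

Lemma eq_shift_pair_cons (H K : seq nat -> seq nat -> V) a b u v m :
  (forall a' b' x y, H (a' :: x) (b' :: y) = K (a' :: x) (b' :: y)) ->
  shift_pair H (a :: u) (b :: v) m = shift_pair K (a :: u) (b :: v) m.
Proof.
move=> HK; apply: eq_antidiag => i j _.
by apply: eq_shift_cons => a' x; apply: eq_shift_cons => b' y.
Qed.

Lemma shift_pair_nil_l (H : seq nat -> seq nat -> V) v m :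
  shift_pair H [::] v m = shift (H [::]) v m.
Proof. exact: antidiag_deltal. Qed.

Lemma shift_pair_nil_r (H : seq nat -> seq nat -> V) u m :
  shift_pair H u [::] m = shift (H^~ [::]) u m.
Proof.
by rewrite /shift_pair /=; under eq_antidiag do rewrite shift_if; exact: antidiag_deltar.
Qed.

Lemma shift_pair_cons_l (H : seq nat -> seq nat -> V) a u v m :
  shift_pair H (a :: u) v m =
  antidiag m (fun s n => shift_pair (fun x => H ((a + s)%N :: x)) u v n *+ c a s).
Proof.
under [RHS]eq_antidiag => s n _ do rewrite -antidiagMn.
exact: antidiagA.
Qed.

Lemma shift_pair_cons_r (H : seq nat -> seq nat -> V) b u v m :
  shift_pair H u (b :: v) m =
  antidiag m (fun j n => shift_pair (fun x y => H x ((b + j)%N :: y)) u v n *+ c b j).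
Proof.
rewrite /shift_pair /=; under eq_antidiag => i r _ do rewrite shift_antidiag.
under eq_antidiag => i r _ do under eq_antidiag => j k _ do rewrite shiftMn.
by rewrite antidiagCA; apply: eq_antidiag => j n _; rewrite -antidiagMn.
Qed.

Lemma shift_pair_cons_add (K : nat -> seq nat -> seq nat -> V) a b u v m :
  (forall n, c (a + b) n = antidiag n (fun s j => c a s * c b j)%N) ->
  shift_pair (fun x y => K (head 0 x + head 0 y)%N (behead x) (behead y))
    (a :: u) (b :: v) m =
  antidiag m (fun p n => shift_pair (K (a + b + p)%N) u v n *+ c (a + b) p).
Proof.
move=> c_conv; rewrite shift_pair_cons_l.
under eq_antidiag => s n _ do rewrite shift_pair_cons_r -antidiagMn.
transitivity (antidiag m (fun s n => antidiag n (fun j k =>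
  shift_pair (K (a + b + (s + j))%N) u v k *+ (c a s * c b j)%N))).
  apply: eq_antidiag => s n _; apply: eq_antidiag => j k _.
  by rewrite addnACA mulnC mulrnA.
rewrite -antidiagA; apply: eq_antidiag => p n _.
rewrite c_conv /antidiag -sumrMnr; apply: eq_bigr => s _.
by rewrite subnKC //; have := ltn_ord s; lia.
Qed.

End Shift.

Section ShiftRing.
Context {V : pzRingType}.
Variable c : nat -> nat -> nat.

Lemma shiftMl (F : seq nat -> V) x u m :
  shift c (fun w => x * F w) u m = x * shift c F u m.
Proof.
elim: u F m => [|a u IH] F m /=; first by case: ifP; rewrite ?mulr0.
by rewrite /antidiag mulr_sumr; apply: eq_bigr => j _; rewrite IH mulrnAr.
Qed.

Lemma shiftMr (F : seq nat -> V) x u m :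
  shift c (fun w => F w * x) u m = shift c F u m * x.
Proof.
elim: u F m => [|a u IH] F m /=; first by case: ifP; rewrite ?mul0r.
by rewrite /antidiag mulr_suml; apply: eq_bigr => j _; rewrite IH mulrnAl.
Qed.

Lemma shift_pair_mul (f g : seq nat -> V) u v m :
  shift_pair c (fun x y => f x * g y) u v m =
  antidiag m (fun i j => shift c f u i * shift c g v j).
Proof.
by apply: eq_antidiag => i j _; rewrite -shiftMr; apply: eq_shift => x; rewrite shiftMl.
Qed.

Lemma shift_nbinomE (F : seq nat -> V) k m :
  shift nbinom F k m = \sum_(n <- wcomps (size k) m) (bcoef k n)%:R * F (oplus k n).
Proof.
elim: k F m => [|a k IH] F m.
  by case: m => [|m] /=; rewrite ?big_nil // big_seq1 /bcoef big_nil mul1r.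
rewrite (_ : wcomps (size (a :: k)) m =
  flatten [seq map (cons i) (wcomps (size k) (m - i)) | i <- iota 0 m.+1]) //.
rewrite big_flatten big_map [LHS]/= /antidiag -[iota 0 m.+1]/(index_iota 0 m.+1) big_mkord.
apply: eq_bigr => j _; rewrite IH big_map -sumrMnl; apply: eq_bigr => n _.
by rewrite /bcoef /= big_cons natrM -mulrA [RHS]mulr_natl.
Qed.

End ShiftRing.

Definition stuffle_sum {V : nmodType} (F : seq nat -> V) (u v : seq nat) : V :=
  \sum_(w <- stuffle_rev u v) F w.

Lemma stuffle_rev_nil_r u : stuffle_rev u [::] = [:: u].
Proof. by case: u. Qed.

Lemma stuffle_rev_cons a u b v :
  stuffle_rev (a :: u) (b :: v) =
  map (cons b) (stuffle_rev (a :: u) v) ++ map (cons a) (stuffle_rev u (b :: v))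
  ++ map (cons (a + b)%N) (stuffle_rev u v).
Proof. by []. Qed.

Lemma stuffle_sum_cons {V : nmodType} (F : seq nat -> V) a u b v :
  stuffle_sum F (a :: u) (b :: v) =
  stuffle_sum (fun w => F (b :: w)) (a :: u) v +
  (stuffle_sum (fun w => F (a :: w)) u (b :: v) +
   stuffle_sum (fun w => F ((a + b)%N :: w)) u v).
Proof. by rewrite /stuffle_sum stuffle_rev_cons !big_cat !big_map. Qed.

Lemma shift_stuffle {V : nmodType} (c : nat -> nat -> nat) (F : seq nat -> V) u v m :
  (forall a b n, c (a + b)%N n = antidiag n (fun s j => c a s * c b j)%N) ->
  \sum_(w <- stuffle_rev u v) shift c F w m = shift_pair c (stuffle_sum F) u v m.
Proof.
move=> c_conv; elim: u v F m => [|a u IHu] v F m.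
  by rewrite big_seq1 shift_pair_nil_l; apply: eq_shift => y; rewrite /stuffle_sum big_seq1.
elim: v F m => [|b v IHv] F m.
  rewrite stuffle_rev_nil_r big_seq1 shift_pair_nil_r.
  by apply: eq_shift => x; rewrite /stuffle_sum stuffle_rev_nil_r big_seq1.
pose H1 x y := stuffle_sum (fun w => F (head 0%N y :: w)) x (behead y).
pose H2 x y := stuffle_sum (fun w => F (head 0%N x :: w)) (behead x) y.
pose H3 x y :=
  stuffle_sum (fun w => F ((head 0 x + head 0 y)%N :: w)) (behead x) (behead y).
have E1 : \sum_(w <- stuffle_rev (a :: u) v) shift c F (b :: w) m =
          shift_pair c H1 (a :: u) (b :: v) m.
  by rewrite sum_shift_cons shift_pair_cons_r; apply: eq_antidiag => j n _; rewrite IHv.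
have E2 : \sum_(w <- stuffle_rev u (b :: v)) shift c F (a :: w) m =
          shift_pair c H2 (a :: u) (b :: v) m.
  by rewrite sum_shift_cons shift_pair_cons_l; apply: eq_antidiag => s n _; rewrite IHu.
have E3 : \sum_(w <- stuffle_rev u v) shift c F ((a + b)%N :: w) m =
          shift_pair c H3 (a :: u) (b :: v) m.
  rewrite sum_shift_cons /H3.
  rewrite (shift_pair_cons_add c (fun p => stuffle_sum (fun w => F (p :: w)))) //.
  by apply: eq_antidiag => s n _; rewrite IHu.
transitivity (shift_pair c (fun x y => H1 x y + (H2 x y + H3 x y)) (a :: u) (b :: v) m).
  by rewrite !shift_pairD stuffle_rev_cons !big_cat !big_map E1 E2 E3.
by apply: eq_shift_pair_cons => a' b' x y; rewrite stuffle_sum_cons.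
Qed.

Lemma zeta_shiftE (R : realType) (Zs : seq nat -> {poly R}) k m :
  zeta_shift Zs k m = (-1) ^+ m * shift nbinom Zs k m.
Proof. by rewrite shift_nbinomE. Qed.

Theorem corollary2p5 (R : realType) (Zs : seq nat -> {poly R}) :
  is_zeta_star Zs ->
  forall k l : seq nat, is_index k -> is_index l ->
  forall m : nat,
    zeta_shift_lin Zs (stuffle k l) m = ps_mul (zeta_shift Zs k) (zeta_shift Zs l) m.
Proof.
case=> _ _ _ Zs_stuffle k l k_idx l_idx m.
have rev_idx w : is_index (rev w) = is_index w by rewrite /is_index all_rev.
rewrite /zeta_shift_lin /stuffle big_map.
under eq_bigr => w _ do rewrite zeta_shiftE shift_rev revK.
rewrite -mulr_sumr shift_stuffle; last exact: nbinomD.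
rewrite (@eq_shift_pair_in _ _ _ (fun x y => Zs (rev x) * Zs (rev y))) ?rev_idx //; last first.
  move=> x y x_idx y_idx; rewrite -Zs_stuffle ?rev_idx //.
  by rewrite /stuffle_sum /stuffle !revK big_map.
rewrite shift_pair_mul /ps_mul /antidiag mulr_sumr; apply: eq_bigr => i _.
rewrite -!shift_rev !zeta_shiftE -{1}(subnKC (ltnSE (ltn_ord i))) exprD.
exact: mulrACA.
Qed.
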